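(* Let $\Gamma$, $T_d$, $G_n$, $\gamma_n$ and $\Phi$ be as in the context, and let $r,l\in\mathbb{N}$. If $v\in\widetilde V_n^{(r+l)}$ and $\eta\in\Omega_{n,B(v,r)^c}$, then there exists $\xi\in\Omega_{T_d(r)^c}$ such that $\xi_{T_d(r)^c\cap T_d(r+l)}=\eta_{B(v,r)^c\cap B(v,r+l)}$, up to the identification of index sets given by the isomorphism $B(v,r+l)\cong T_d(r+l)$, $g\mapsto\gamma_n(g)(v)$.
   Context: $A$ is a finite set. Either (1) $d=2k$ and $\Gamma$ is the free group on $s_1,\dots,s_k$, or (2) $\Gamma$ is the free product of $d$ copies of $\mathbb{Z}/2\mathbb{Z}$ generated by involutions $s_1,\dots,s_d$. $T_d$ is the Cayley graph of $\Gamma$ (edges $w$—$ws_i$ coloured $s_i$, directed in case (1)), rooted at the identity $\phi$; $T_d(r)$ is the closed ball of radius $r$ about $\phi$. $G_n=(V_n,E_n)$ is a finite $d$-regular graph given by permutations $\gamma_n^{(i)}$ of $V_n$ ($k$ permutations in case (1), with edges $\{u,\gamma_n^{(i)}(u)\}$ labelled $s_i$ and directed, no edge receiving two labels or both directions; $d$ involutions in case (2) with $\gamma_n^{(i)}(u)\neq\gamma_n^{(j)}(u)$ for $i\ne j$), and $\gamma_n:\Gamma\to\mathrm{Sym}(V_n)$ is the homomorphism with $\gamma_n(s_i)=\gamma_n^{(i)}$. $B(v,r)$ is the closed ball in $G_n$, and $\widetilde V_n^{(r)}$ is the set of $v\in V_n$ such that $g\mapsto\gamma_n(g)(v)$ is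 an isomorphism $T_d(r)\cong B(v,r)$ (respecting labels and directions). For $x\in A^{V_n}$, $\Pi_v^{\gamma_n}(x)=(x_{\gamma_n(g)(v)})_{g\in\Gamma}$. $\mathcal F$ is a locally finite family of finite subsets of $\Gamma$ and $\Phi:\bigcup_{F\in\mathcal F}A^F\to[-\infty,\infty)$ is a finite-range, translation-invariant interaction ($F\in\mathcal F\Rightarrow Fg\in\mathcal F$, with $\Phi$ on $Fg$ corresponding to $\Phi$ on $F$ via $h\mapsto hg$); $\mathcal F_0$ is a finite transversal for this action. $U_n^\Phi(\sigma)=\sum_{v\in V_n}\sum_{F\in\mathcal F_0}\Phi((\Pi_v^{\gamma_n}(\sigma))_F)$ for $\sigma\in A^{V_n}$. $\Omega_n=\{\sigma\in A^{V_n}:U_n^\Phi(\sigma)>-\infty\}$ and, for $W\subseteq V_n$, $\Omega_{n,W}$ is the set of $\xi\in A^W$ having an extension in $\Omega_n$. $\Omega$ is the set of $\xi\in A^\Gamma$ with $\Phi(\xi_F)>-\infty$ for every $F\in\mathcal F$, and $\Omega_W$ (for $W\subseteq\Gamma$) its projection to $A^W$. Complements: $B(v,r)^c=V_n\setminus B(v,r)$, $T_d(r)^c=\Gamma\setminus T_d(r)$. *)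

From HB Require Import structures.
From mathcomp Require Import all_boot all_order all_algebra all_fingroup.
From mathcomp Require Import finmap.
From mathcomp Require Import reals constructive_ereal.

Set Implicit Arguments.
Unset Strict Implicit.
Unset Printing Implicit Defensive.

Import Order.TTheory GRing.Theory Num.Theory.
Local Open Scope fset_scope.

(* The two cases of the paper:
   FreeGroup k : Gamma = free group on s_1..s_k   (d = 2k)
   FreeZ2 d    : Gamma = free product of d copies of Z/2Z. *)
Inductive tcase := FreeGroup of nat | FreeZ2 of nat.

Definition ngen (c : tcase) : nat :=
  match c with FreeGroup k => k | FreeZ2 d => d end.

(* letters: s_i^{+-1} in case (1), s_i in case (2) *)
Definition letter (c : tcase) : finType :=
  match c with
  | FreeGroup k => ('I_k * bool)%type
  | FreeZ2 d => 'I_d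
  end.

Definition linv (c : tcase) : letter c -> letter c :=
  match c return letter c -> letter c with
  | FreeGroup k => fun a => (a.1, ~~ a.2)
  | FreeZ2 d => fun a => a
  end.

Definition reduced (c : tcase) (w : seq (letter c)) : bool :=
  if w is a :: w' then path (fun x y => y != linv x) a w' else true.

Definition cons_red (c : tcase) (a : letter c) (w : seq (letter c)) :=
  if w is b :: w' then (if b == linv a then w' else a :: w) else [:: a].

Lemma reduced_cons_red c (a : letter c) w : reduced w -> reduced (cons_red a w).
Proof.
case: w => [|b w] //= H; case: ifP => Hb /=.
  by case: w H => //= x w /andP[].
by rewrite Hb H.
Qed.

Lemma reduced_foldr c (g h : seq (letter c)) :
  reduced h -> reduced (foldr (@cons_red c) h g).
Proof. by elim: g => //= a g IH Hh; apply: reduced_cons_red; apply: IH. Qed.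

Definition Gamma (c : tcase) := {w : seq (letter c) | reduced w}.
HB.instance Definition _ c := Countable.on (Gamma c).

Definition gone c : Gamma c := exist _ [::] isT.

Definition gmul c (g h : Gamma c) : Gamma c :=
  exist _ (foldr (@cons_red c) (sval h) (sval g)) (reduced_foldr (sval g) (svalP h)).

(* word length = distance to the root phi in T_d *)
Definition glen c (g : Gamma c) : nat := size (sval g).

Definition tedge c (a : letter c) (g h : Gamma c) : Prop := sval h = cons_red a (sval g).

Definition rtrans c (F : {fset Gamma c}) (g : Gamma c) : {fset Gamma c} :=
  [fset gmul x g | x in F].

Definition restr c (A : finType) (xi : Gamma c -> A) (F : {fset Gamma c}) : {ffun F -> A} :=
  [ffun x : F => xi (val x)].

Section Graph.
Variables (c : tcase) (V : finType) (gens : 'I_(ngen c) -> {perm V}).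

Definition lperm : letter c -> {perm V} :=
  match c return ('I_(ngen c) -> {perm V}) -> letter c -> {perm V} with
  | FreeGroup k => fun gs a => if a.2 then gs a.1 else (gs a.1)^-1%g
  | FreeZ2 d => fun gs a => gs a
  end gens.

Definition graph_ok : Prop :=
  (match c return ('I_(ngen c) -> {perm V}) -> Prop with
   | FreeGroup _ => fun _ => True
   | FreeZ2 _ => fun gs => forall i u, gs i (gs i u) = u
   end gens) /\
  (* no edge with two labels / both directions; in case (2):
     gamma^(i)(u) <> gamma^(j)(u) for i <> j *)
  (forall u, injective (fun a : letter c => lperm a u)).

Definition gammav (g : Gamma c) (v : V) : V := foldr (fun a u => lperm a u) v (sval g).

Fixpoint ballG (v : V) (r : nat) : {set V} :=
  if r is r'.+1 then
    ballG v r' :|: \bigcup_(a : letter c) [set lperm a u | u in ballG v r']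
  else [set v].

(* v in tilde V^(r): g |-> gamma(g)(v) is an isomorphism T_d(r) ~= B(v,r) *)
Definition in_tildeV (r : nat) (v : V) : Prop :=
  [/\ (forall g h : Gamma c, glen g <= r -> glen h <= r -> gammav g v = gammav h v -> g = h),
      (forall u, u \in ballG v r <-> exists g : Gamma c, glen g <= r /\ gammav g v = u) &
      (forall (a : letter c) (g h : Gamma c), glen g <= r -> glen h <= r ->
         (tedge a g h <-> lperm a (gammav g v) = gammav h v))].

Definition Pi (A : Type) (v : V) (x : V -> A) : Gamma c -> A := fun g => x (gammav g v).
End Graph.

Local Open Scope ereal_scope.

Definition interaction (c : tcase) (A : finType) (R : realType)
  (Fam : {fset Gamma c} -> Prop)
  (Phi : forall F : {fset Gamma c}, {ffun F -> A} -> \bar R)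
  (F0 : seq {fset Gamma c}) : Prop :=
  (forall (F : {fset Gamma c}) (f : {ffun F -> A}), Phi F f != +oo) /\
  [/\
      (forall F g, Fam F -> Fam (rtrans F g)),
      (forall F g (xi : Gamma c -> A), Fam F ->
         Phi (rtrans F g) (restr xi (rtrans F g)) = Phi F (restr (fun h => xi (gmul h g)) F)),
      (* F0 is a finite transversal of the action *)
      [/\ uniq F0, (forall F, F \in F0 -> Fam F),
          (forall F, Fam F -> exists F' g, F' \in F0 /\ F = rtrans F' g) &
          (forall F1 F2 g1 g2, F1 \in F0 -> F2 \in F0 -> rtrans F1 g1 = rtrans F2 g2 -> F1 = F2)],
      (forall g, exists s : seq {fset Gamma c}, forall F, Fam F -> g \in F -> F \in s) &
      (exists K : nat, forall F, Fam F -> forall g h, g \in F -> h \in F ->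
         exists w : Gamma c, (glen w <= K)%N /\ h = gmul w g)].

Definition Un (c : tcase) (A V : finType) (R : realType) (gens : 'I_(ngen c) -> {perm V})
  (Phi : forall F : {fset Gamma c}, {ffun F -> A} -> \bar R)
  (F0 : seq {fset Gamma c}) (sigma : V -> A) : \bar R :=
  \sum_(v : V) \sum_(F <- F0) Phi F (restr (Pi gens v sigma) F).

Definition in_Omega_n (c : tcase) (A V : finType) (R : realType) (gens : 'I_(ngen c) -> {perm V})
  (Phi : forall F : {fset Gamma c}, {ffun F -> A} -> \bar R) (F0 : seq {fset Gamma c}) (sigma : V -> A) : Prop :=
  -oo < @Un c A V R gens Phi F0 sigma.

Definition in_Omega_nW (c : tcase) (A V : finType) (R : realType) (gens : 'I_(ngen c) -> {perm V})
  (Phi : forall F : {fset Gamma c}, {ffun F -> A} -> \bar R) (F0 : seq {fset Gamma c}) (W : {set V}) (eta : V -> A) : Prop :=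
  exists sigma : V -> A, @in_Omega_n c A V R gens Phi F0 sigma /\
    forall u, u \in W -> sigma u = eta u.

Definition in_Omega (c : tcase) (A : finType) (R : realType)
  (Fam : {fset Gamma c} -> Prop)
  (Phi : forall F : {fset Gamma c}, {ffun F -> A} -> \bar R) (xi : Gamma c -> A) : Prop :=
  forall F, Fam F -> -oo < Phi F (restr xi F).

Definition in_OmegaW (c : tcase) (A : finType) (R : realType) (Fam : {fset Gamma c} -> Prop)
  (Phi : forall F : {fset Gamma c}, {ffun F -> A} -> \bar R) (W : Gamma c -> Prop) (xi : Gamma c -> A) : Prop :=
  exists zeta : Gamma c -> A, @in_Omega c A R Fam Phi zeta /\
    forall g, W g -> zeta g = xi g.

From HB Require Import structures.
From mathcomp Require Import all_boot all_order all_algebra all_fingroup.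
From mathcomp Require Import finmap.
From mathcomp Require Import reals constructive_ereal.

(* Take xi := Pi_v(sigma) for an admissible extension sigma of eta.  Every
   F in the family is a translate F'g of some F' in F0, and by translation
   invariance Phi(Fg, Pi_v sigma) = Phi(F', Pi_{gamma(g)v} sigma), which is
   one of the (finite) summands of U_n(sigma); so xi lies in Omega.  Since
   g |-> gamma(g)(v) is injective on T_d(r+l), a word of length in (r, r+l]
   is sent outside B(v,r), where sigma agrees with eta. *)

Set Implicit Arguments.
Unset Strict Implicit.
Unset Printing Implicit Defensive.

Section GraphAction.
Variables (c : tcase) (V : finType) (gens : 'I_(ngen c) -> {perm V}).
Hypothesis gens_ok : graph_ok gens.

Definition word_act (w : seq (letter c)) (v : V) : V :=
  foldr (fun a u => lperm gens a u) v w.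

Lemma lpermK_linv (a : letter c) (u : V) :
  lperm gens a (lperm gens (linv a) u) = u.
Proof.
case: c gens gens_ok a => [k|d] gs [invol _] a /=; last exact: invol.
by case: a => i [] /=; rewrite ?permKV ?permK.
Qed.

Lemma word_act_cons_red (a : letter c) (w : seq (letter c)) (v : V) :
  word_act (cons_red a w) v = lperm gens a (word_act w v).
Proof. by case: w => [|b w] //=; case: ifP => //= /eqP ->; rewrite lpermK_linv. Qed.

Lemma word_act_foldr (g h : seq (letter c)) (v : V) :
  word_act (foldr (@cons_red c) h g) v = word_act g (word_act h v).
Proof. by elim: g => //= a g IH; rewrite word_act_cons_red IH. Qed.

Lemma gammav_gmul (g h : Gamma c) (v : V) :
  gammav gens (gmul g h) v = gammav gens g (gammav gens h v).
Proof. exact: word_act_foldr. Qed.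

Lemma size_cons_red (a : letter c) (w : seq (letter c)) :
  size (cons_red a w) <= (size w).+1.
Proof. by case: w => [|b w] //=; case: ifP => //= _; rewrite leqW. Qed.

Lemma ballG_gammav (v : V) (r : nat) (u : V) :
  u \in ballG gens v r -> exists g : Gamma c, glen g <= r /\ gammav gens g v = u.
Proof.
elim: r u => [|r IH] u /=.
  by rewrite inE => /eqP ->; exists (gone c).
case/setUP => [/IH [g [g_le <-]] | /bigcupP [a _ /imsetP [w /IH [g [g_le <-]] ->]]].
  by exists g; split => //; apply: leqW.
exists (exist (fun w => reduced w) _ (reduced_cons_red a (svalP g))); split.
  by apply: leq_trans (size_cons_red a (sval g)) _; rewrite ltnS.
exact: word_act_cons_red.
Qed.

Lemma gammav_notin_ballG (R r : nat) (v : V) (g : Gamma c) :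
  in_tildeV gens R v -> r < glen g <= R -> gammav gens g v \notin ballG gens v r.
Proof.
move=> [inj _ _] /andP [r_lt g_le]; apply/negP => /ballG_gammav [h [h_le gh]].
have h_g : h = g by apply: inj => //; apply: leq_trans h_le (leq_trans (ltnW r_lt) g_le).
by rewrite -h_g ltnNge h_le in r_lt.
Qed.

End GraphAction.

Local Open Scope ereal_scope.

Section Interaction.
Variables (c : tcase) (A V : finType) (R : realType).
Variables (gens : 'I_(ngen c) -> {perm V}) (Fam : {fset Gamma c} -> Prop).
Variables (Phi : forall F : {fset Gamma c}, {ffun F -> A} -> \bar R).
Variable (F0 : seq {fset Gamma c}).

Lemma in_Omega_n_Phi_gtNy (sigma : V -> A) (u : V) (F : {fset Gamma c}) :
  in_Omega_n gens Phi F0 sigma -> F \in F0 -> -oo < Phi (restr (Pi gens u sigma) F).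
Proof.
rewrite /in_Omega_n !ltNye => Un_fin F_in; apply: contra Un_fin => /eqP PhiNy.
apply/eqP/esum_eqNyP; exists u; split => //.
by apply/esum_eqNyP; exists F; split => //; apply/eqP.
Qed.

Hypothesis gens_ok : graph_ok gens.
Hypothesis Phi_int : interaction Fam Phi F0.

Lemma Pi_in_Omega (sigma : V -> A) (v : V) :
  in_Omega_n gens Phi F0 sigma -> in_Omega Fam Phi (Pi gens v sigma).
Proof.
move=> sigma_ok F FamF.
have [_ [_ Phi_rtrans [_ F0_Fam F0_transv _] _ _]] := Phi_int.
have [F' [g [F'_in ->]]] := F0_transv F FamF.
rewrite Phi_rtrans; last exact: F0_Fam.
have -> : restr (fun h => Pi gens v sigma (gmul h g)) F' =
          restr (Pi gens (gammav gens g v) sigma) F'.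
  by apply/ffunP => x; rewrite !ffunE /Pi gammav_gmul.
exact: in_Omega_n_Phi_gtNy.
Qed.

End Interaction.

Theorem lemma3p1 (c : tcase) (A V : finType) (R : realType)
  (gens : 'I_(ngen c) -> {perm V}) (Hgraph : graph_ok gens)
  (Fam : {fset Gamma c} -> Prop)
  (Phi : forall F : {fset Gamma c}, {ffun F -> A} -> \bar R)
  (F0 : seq {fset Gamma c}) (HPhi : interaction Fam Phi F0)
  (r l : nat) (v : V) (eta : V -> A) :
  in_tildeV gens (r + l) v ->
  in_Omega_nW gens Phi F0 (~: ballG gens v r) eta ->
  exists xi : Gamma c -> A,
    in_OmegaW Fam Phi (fun g => (r < glen g)%N) xi /\
    (forall g : Gamma c, (r < glen g <= r + l)%N -> xi g = eta (gammav gens g v)).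
Proof.
move=> v_tilde [sigma [sigma_ok sigma_eta]].
exists (Pi gens v sigma); split.
  by exists (Pi gens v sigma); split => //; apply: (Pi_in_Omega Hgraph HPhi).
move=> g g_range; apply: sigma_eta.
by rewrite inE; apply: gammav_notin_ballG g_range.
Qed.
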